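(* Let $V$ be a finite-dimensional complex vector space with a Hermitian inner product, $\mathbf G$ a finite group of unitary transformations of $V$, $\mathbf x_0\in V$ a unit vector with full orbit under $\mathbf G$, $\{I\}=\mathbf G_0<\cdots<\mathbf G_m=\mathbf G$ a subgroup sequence, and $\operatorname{CL}(\mathbf G_k/\mathbf G_{k-1})$ ($1\le k\le m$) coset leader sets. If for every $k$ with $1\le k<m$ every induced coset leader in $\operatorname{CL}(\mathbf G/\mathbf G_k)$ is minimal, then the subgroup decoding algorithm decodes correctly with some noise.
   Context: Full orbit: $|\mathbf G\mathbf x_0|=|\mathbf G|$; then $\operatorname{Stab}_{\mathbf G}(\mathbf x_0)=\{I\}$. $\operatorname{CL}(\mathbf G_k/\mathbf G_{k-1})$ is a set of representatives of the left cosets of $\mathbf G_{k-1}$ in $\mathbf G_k$ containing $I$; induced coset leaders $\operatorname{CL}(\mathbf G_l/\mathbf G_k)=\{c_l\cdots c_{k+1}:c_i\in\operatorname{CL}(\mathbf G_i/\mathbf G_{i-1})\}$. Subgroup decoding algorithm: given $\mathbf r$, set $\mathbf r_0=\mathbf r$; for $k=1,\dots,m$ choose $d_k\in\operatorname{CL}(\mathbf G_k/\mathbf G_{k-1})$ minimizing $\|a\mathbf r_{k-1}-\mathbf x_0\|$ over $a\in\operatorname{CL}(\mathbf G_k/\mathbf G_{k-1})$ (ties broken by a fixed ordering), set $\mathbf r_k=d_k\mathbf r_{k-1}$; output $g'=d_m\cdots d_1$. It decodes correctly with some noise if there is $\delta>0$ such that for all $g\in\mathbf G$ and $\mathbf r$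 with $\|\mathbf r-g^{-1}\mathbf x_0\|<\delta$ the output is $g$. For a subgroup $H$, $\operatorname{FR}(H)=\{\mathbf x:\|\mathbf x-\mathbf x_0\|<\|h\mathbf x-\mathbf x_0\|\ \forall h\in H\setminus\operatorname{Stab}_H(\mathbf x_0)\}$. For $H\le K$, a coset representative $c$ of $H$ in $K$ is minimal if $\mathbf x_0\in c(\operatorname{FR}(H))$. *)

(* complex numbers R[i] over an arbitrary R : realType (i.e. C),
   V = C^n as column vectors with the standard Hermitian inner product,
   the finite group G given as a group gT with a matrix representation rG. *)
From HB Require Import structures.
From mathcomp Require Import all_boot all_order all_algebra all_fingroup.
From mathcomp Require Import mxrepresentation.
From mathcomp Require Import complex.
From mathcomp Require Import reals.

Set Implicit Arguments.
Unset Strict Implicit.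
Unset Printing Implicit Defensive.

Import Order.TTheory GRing.Theory Num.Theory.
Local Open Scope ring_scope.
Local Open Scope group_scope.

Section Defs.
Variable R : realType.
Local Notation C := R[i].

Definition cnorm2 (z : C) : R := complex.Re z ^+ 2 + complex.Im z ^+ 2.

Definition vnorm n (x : 'cV[C]_n) : R := Num.sqrt (\sum_(i < n) cnorm2 (x i 0)).

Definition adjmx n (A : 'M[C]_n) : 'M[C]_n := (map_mx (@conjc R) A)^T.
Definition unitary_mx n (A : 'M[C]_n) : Prop := (A *m adjmx A = 1%:M)%R.

Variables (gT : finGroupType) (G : {group gT}) (n : nat).
Variable rG : mx_representation C G n.
Variable x0 : 'cV[C]_n.

Definition full_orbit : Prop :=
  size (undup [seq (rG g *m x0)%R | g in G]) = #|G|.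

Definition coset_leaders (H K : {set gT}) (CL : {set gT}) : Prop :=
  [/\ CL \subset K, 1 \in CL &
      forall x, x \in K -> exists! c, c \in CL /\ x \in c *: H].

(* induced coset leaders CL(G_l / G_k) = { c_l ... c_{k+1} } *)
Fixpoint ind_CL (CL : nat -> {set gT}) (k l : nat) : {set gT} :=
  match l with
  | 0 => [set 1]
  | l'.+1 => if (k < l'.+1)%N then CL l'.+1 * ind_CL CL k l' else [set 1]
  end.

Definition stab (H : {set gT}) : {set gT} :=
  [set h in H | (rG h *m x0)%R == x0].

Definition FR (H : {set gT}) (x : 'cV[C]_n) : Prop :=
  forall h, h \in H :\: stab H ->
    vnorm (x - x0)%R < vnorm (rG h *m x - x0)%R.

Definition minimal_rep (H : {set gT}) (c : gT) : Prop :=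
  exists y, FR H y /\ x0 = (rG c *m y)%R.

(* one step of subgroup decoding: choose d in CL minimizing ||a r - x0||,
   ties broken by the fixed total order induced by the injective key [key] *)
Definition better (key : gT -> nat) (r : 'cV[C]_n) (d a : gT) : bool :=
  (vnorm (rG d *m r - x0)%R < vnorm (rG a *m r - x0)%R)
  || ((vnorm (rG d *m r - x0)%R == vnorm (rG a *m r - x0)%R)
      && (key d <= key a)%N).

Definition dec_choice (key : gT -> nat) (CL : {set gT}) (r : 'cV[C]_n) : gT :=
  odflt 1 [pick d in CL | [forall a in CL, better key r d a]].

Fixpoint dec_state (key : gT -> nat) (CL : nat -> {set gT}) (r : 'cV[C]_n)
    (k : nat) : 'cV[C]_n * gT :=
  match k with
  | 0 => (r, 1)
  | k'.+1 =>
      let st := dec_state key CL r k' in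
      let d := dec_choice key (CL k'.+1) st.1 in
      ((rG d *m st.1)%R, d * st.2)
  end.

Definition subgroup_decode (key : gT -> nat) (CL : nat -> {set gT}) (m : nat)
    (r : 'cV[C]_n) : gT := (dec_state key CL r m).2.

Definition decodes_correctly_with_noise (key : gT -> nat) (CL : nat -> {set gT})
    (m : nat) : Prop :=
  exists2 delta : R, 0 < delta &
    forall g r, g \in G -> vnorm (r - rG (g^-1)%g *m x0)%R < delta ->
      subgroup_decode key CL m r = g.

End Defs.

(* Write g = c_m ... c_1 with c_k in CL(G_k/G_(k-1)).  At step k the noiseless
   decoder compares the distances |a c_(k-1) ... c_1 g^-1 x0 - x0| over the leaders a.
   Splitting g = Q c_k P with Q in CL(G/G_k), the true leader c_k yields Q^-1 x0,
   which lies in FR(G_k) because Q is minimal (for k = m, Q = 1 and x0 itself is in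
   FR), while any other leader a yields b Q^-1 x0 with b = a c_k^-1 in G_k moving x0
   (the orbit is full); hence c_k is the strict minimiser.  The group acts unitarily,
   so the decoder's distances move by at most the noise, and noise below half the
   least positive gap between the finitely many values |w x0 - x0| changes no choice. *)

From HB Require Import structures.
From mathcomp Require Import all_boot all_order all_algebra all_fingroup.
From mathcomp Require Import mxrepresentation complex reals.
From mathcomp Require Import ring lra.
Import Order.TTheory GRing.Theory Num.Theory.
Local Open Scope ring_scope.

Set Implicit Arguments.
Unset Strict Implicit.
Unset Printing Implicit Defensive.

Section HermitianNorm.
Variable R : realType.
Local Notation C := R[i].
Local Open Scope complex_scope.
Implicit Types (z : C).

Lemma cnorm2_ge0 z : 0 <= cnorm2 z.
Proof. by case: z => a b; rewrite /cnorm2 /=; nra. Qed.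

Lemma cnorm2_eq0 z : cnorm2 z = 0 -> z = 0.
Proof.
case: z => a b; rewrite /cnorm2 /= => ab0.
have -> : a = 0 by nra.
by have -> : b = 0 by nra.
Qed.

Lemma cnorm2E z : (cnorm2 z)%:C = conjc z * z.
Proof.
case: z => a b; apply/eqP; rewrite eq_complex /cnorm2 /=.
by apply/andP; split; apply/eqP; ring.
Qed.

Variable n : nat.
Implicit Types (x y : 'cV[C]_n).

Definition sqnorm x : R := \sum_(i < n) cnorm2 (x i 0).

Lemma sqnorm_ge0 x : 0 <= sqnorm x.
Proof. by apply: sumr_ge0 => i _; apply: cnorm2_ge0. Qed.

Lemma sqnorm_eq0 x : sqnorm x = 0 -> x = 0.
Proof.
move=> sq0; apply/matrixP => i j; rewrite (ord1 j) mxE; apply: cnorm2_eq0.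
exact: (psumr_eq0P (fun i _ => cnorm2_ge0 (x i 0)) sq0).
Qed.

Lemma sqr_vnorm x : vnorm x ^+ 2 = sqnorm x.
Proof. by rewrite sqr_sqrtr // sqnorm_ge0. Qed.

Lemma vnorm_ge0 x : 0 <= vnorm x.
Proof. exact: sqrtr_ge0. Qed.

Lemma vnorm0 : vnorm (0 : 'cV[C]_n) = 0.
Proof. by rewrite /vnorm big1 ?sqrtr0 // => i _; rewrite mxE /cnorm2 /= expr0n addr0. Qed.

Lemma vnorm_gt0 x : x != 0 -> 0 < vnorm x.
Proof.
move=> /negP nx0; rewrite sqrtr_gt0 lt_def sqnorm_ge0 andbT.
by apply/eqP => /sqnorm_eq0 /eqP.
Qed.

Lemma vnormN x : vnorm (- x) = vnorm x.
Proof.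
congr Num.sqrt; apply: eq_bigr => i _.
by rewrite mxE; case: (x i 0) => a b; rewrite /cnorm2 /=; ring.
Qed.

Lemma vnormB_sym x y : vnorm (x - y) = vnorm (y - x).
Proof. by rewrite -vnormN opprB. Qed.

Lemma sqnorm_unitary (A : 'M[C]_n) x : unitary_mx A -> sqnorm (A *m x) = sqnorm x.
Proof.
move=> /mulmx1C AA1; apply: complexI.
suff sqnormE y : (sqnorm y)%:C = ((map_mx conjc y)^T *m y) 0 0.
  by rewrite !sqnormE map_mxM trmx_mul -mulmxA (mulmxA _ A) AA1 mul1mx.
rewrite mxE rmorph_sum; apply: eq_bigr => i _.
by rewrite !mxE -cnorm2E.
Qed.

Lemma vnorm_unitary (A : 'M[C]_n) x : unitary_mx A -> vnorm (A *m x) = vnorm x.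
Proof. by move=> unitA; congr Num.sqrt; apply: sqnorm_unitary. Qed.

Definition dotr x y : R :=
  \sum_(i < n) (complex.Re (x i 0) * complex.Re (y i 0)
                + complex.Im (x i 0) * complex.Im (y i 0)).

Lemma sqnormD x y : sqnorm (x + y) = sqnorm x + sqnorm y + 2 * dotr x y.
Proof.
rewrite /sqnorm /dotr mulr_sumr -!big_split /=; apply: eq_bigr => i _.
by rewrite !mxE; case: (x i 0) => a b; case: (y i 0) => c d; rewrite /cnorm2 /=; ring.
Qed.

Lemma dotr_le_vnorm x y : dotr x y <= vnorm x * vnorm y.
Proof.
have [->|nx0] := eqVneq x 0.
  by rewrite vnorm0 mul0r /dotr big1 // => i _; rewrite mxE /=; ring.
have [->|ny0] := eqVneq y 0.
  by rewrite vnorm0 mulr0 /dotr big1 // => i _; rewrite mxE /=; ring.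
set sx := vnorm x; set sy := vnorm y.
have sx_gt0 : 0 < sx by apply: vnorm_gt0.
have sy_gt0 : 0 < sy by apply: vnorm_gt0.
suff le : 2 * (sx * sy) * dotr x y <= sy ^+ 2 * sqnorm x + sx ^+ 2 * sqnorm y.
  rewrite -!sqr_vnorm -/sx -/sy in le.
  rewrite -(ler_pM2l (_ : 0 < 2 * (sx * sy))) ?mulr_gt0 //.
  by apply: le_trans le _; rewrite le_eqVlt; apply/orP; left; apply/eqP; ring.
(* termwise [0 <= (sy u - sx v)^2], summed *)
rewrite /dotr /sqnorm !mulr_sumr -big_split /=.
apply: ler_sum => i _; rewrite /cnorm2; case: (x i 0) => a b; case: (y i 0) => c d /=.
rewrite -subr_ge0.
have -> : sy ^+ 2 * (a ^+ 2 + b ^+ 2) + sx ^+ 2 * (c ^+ 2 + d ^+ 2)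
    - 2 * (sx * sy) * (a * c + b * d)
    = (sy * a - sx * c) ^+ 2 + (sy * b - sx * d) ^+ 2 by ring.
by rewrite addr_ge0 // sqr_ge0.
Qed.

Lemma vnormD x y : vnorm (x + y) <= vnorm x + vnorm y.
Proof.
have sq_le : sqnorm (x + y) <= (vnorm x + vnorm y) ^+ 2.
  by have := dotr_le_vnorm x y; rewrite sqnormD -!sqr_vnorm; nra.
apply: le_trans (ler_wsqrtr sq_le) _.
by rewrite sqrtr_sqr ger0_norm // addr_ge0 // vnorm_ge0.
Qed.

Lemma vnormB_lipschitz x y (z : 'cV[C]_n) : `|vnorm (x - z) - vnorm (y - z)| <= vnorm (x - y).
Proof.
have le1 := vnormD (x - y) (y - z); have le2 := vnormD (y - x) (x - z).
rewrite !addrA !subrK in le1 le2; rewrite (vnormB_sym y x) in le2.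
by rewrite ler_norml; apply/andP; split; lra.
Qed.

End HermitianNorm.

Section SegmentProducts.
Variable gT : finGroupType.
Implicit Types (c : nat -> gT) (CL : nat -> {set gT}).

Fixpoint seg_prod c (k l : nat) : gT :=
  match l with
  | 0 => 1%g
  | l'.+1 => if (k < l'.+1)%N then (c l'.+1 * seg_prod c k l')%g else 1%g
  end.

Lemma seg_prodnn c k : seg_prod c k k = 1%g.
Proof. by case: k => //= k; rewrite ltnn. Qed.

Lemma seg_prodSr c k l : (k <= l)%N -> seg_prod c k l.+1 = (c l.+1 * seg_prod c k l)%g.
Proof. by rewrite /= ltnS => ->. Qed.

Lemma seg_prod_split c i k l : (i <= k <= l)%N ->
  seg_prod c i l = (seg_prod c k l * seg_prod c i k)%g.
Proof.
case/andP=> ik; elim: l => [|l IH] kl.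
  by move: kl; rewrite leqn0 => /eqP->; rewrite mulg1.
have [<-|nkl] := eqVneq k l.+1; first by rewrite seg_prodnn mul1g.
have kl' : (k <= l)%N by rewrite -ltnS ltn_neqAle nkl.
by rewrite !seg_prodSr ?(leq_trans ik) // (IH kl') mulgA.
Qed.

Lemma eq_seg_prod c c' k l : (forall i, (k < i <= l)%N -> c i = c' i) ->
  seg_prod c k l = seg_prod c' k l.
Proof.
elim: l => [|l IH] eqc //=; case: ifP => // kl.
congr (_ * _)%g; first by rewrite eqc // kl leqnn.
by apply: IH => i /andP[ki il]; rewrite eqc // ki leqW.
Qed.

Lemma seg_prod_mem (K : {group gT}) c k l :
  (forall i, (k < i <= l)%N -> c i \in K) -> seg_prod c k l \in K.
Proof.
elim: l => [|l IH] cK /=; first exact: group1.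
case: ifP => kl; last exact: group1.
rewrite groupM ?cK ?kl ?leqnn //.
by apply: IH => i /andP[ki il]; rewrite cK // ki leqW.
Qed.

Lemma seg_prod_ind_CL CL c k l :
  (forall i, (k < i <= l)%N -> c i \in CL i) -> seg_prod c k l \in ind_CL CL k l.
Proof.
elim: l => [|l IH] cCL /=; first exact: set11.
case: ifP => kl; last exact: set11.
rewrite mem_mulg ?cCL ?kl ?leqnn //.
by apply: IH => i /andP[ki il]; rewrite cCL // ki leqW.
Qed.

End SegmentProducts.

Lemma lt_near_separated (R : realFieldType) (x y a b e : R) :
  `|x - a| < e -> `|y - b| < e -> e <= (b - a) / 2 -> x < y.
Proof. by rewrite !ltr_norml; lra. Qed.

Section SubgroupDecoding.
Variables (R : realType) (n : nat) (gT : finGroupType) (G : {group gT}).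
Variable rG : mx_representation R[i] G n.
Hypothesis rG_unitary : forall g, g \in G -> unitary_mx (rG g).
Variable x0 : 'cV[R[i]]_n.
Hypothesis x0_full_orbit : full_orbit rG x0.

Lemma dec_choice_strict_min (key : gT -> nat) (CL : {set gT}) r c : c \in CL ->
  (forall a, a \in CL -> a != c ->
     vnorm (rG c *m r - x0) < vnorm (rG a *m r - x0)) ->
  dec_choice rG x0 key CL r = c.
Proof.
move=> cCL cmin; rewrite /dec_choice; case: pickP => [d /andP[dCL /forall_inP dbest]|].
  apply/eqP; apply: contraT => ndc; have := dbest c cCL.
  by rewrite /better; have := cmin d dCL ndc => lt; rewrite ltNge (ltW lt) gt_eqF.
move=> /(_ c); rewrite cCL /= => /negP[]; apply/forall_inP => a aCL.
have [->|nac] := eqVneq a c; first by rewrite /better eqxx leqnn orbT.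
by rewrite /better cmin.
Qed.

Lemma orbit_inj : {in G &, injective (fun g => rG g *m x0)}.
Proof.
apply/dinjectiveP; apply/negPn.
by rewrite -ltn_size_undup x0_full_orbit size_image ltnn.
Qed.

Lemma fix_x0_eq1 w : w \in G -> rG w *m x0 = x0 -> w = 1%g.
Proof. by move=> wG wx0; apply: orbit_inj; rewrite ?group1 // repr_mx1 mul1mx. Qed.

Lemma FR_x0 (H : {set gT}) : FR rG x0 H x0.
Proof.
move=> h; rewrite !inE negb_and => /andP[/orP[/negbTE -> //|hx0] _].
by rewrite subrr vnorm0 vnorm_gt0 // subr_eq0.
Qed.

Lemma minimal_rep1 (H : {set gT}) : minimal_rep rG x0 H 1%g.
Proof. by exists x0; rewrite repr_mx1 mul1mx; split; first exact: FR_x0. Qed.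

Definition orbit_dist (w : gT) : R := vnorm (rG w *m x0 - x0).

Lemma orbit_dist_lt_minimal (H : {set gT}) q b : q \in G -> b \in G ->
  minimal_rep rG x0 H q -> b \in H :\: stab rG x0 H ->
  orbit_dist q^-1%g < orbit_dist (b * q^-1)%g.
Proof.
move=> qG bG [y [FRy x0E]].
have qx0 : rG q^-1%g *m x0 = y.
  by rewrite x0E mulmxA -repr_mxM ?groupV // mulVg repr_mx1 mul1mx.
by rewrite /orbit_dist repr_mxM ?groupV // -mulmxA qx0; apply: FRy.
Qed.

Definition orbit_gap : R :=
  \big[Order.min/1]_(p : gT * gT | orbit_dist p.1 < orbit_dist p.2)
     ((orbit_dist p.2 - orbit_dist p.1) / 2).

Lemma orbit_gap_gt0 : 0 < orbit_gap.
Proof. by apply: lt_bigmin => // p lt12; rewrite divr_gt0 // subr_gt0. Qed.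

Lemma orbit_gap_le u v : orbit_dist u < orbit_dist v ->
  orbit_gap <= (orbit_dist v - orbit_dist u) / 2.
Proof. exact: (bigmin_le_cond _ (j := (u, v))). Qed.

Lemma noisy_orbit_dist u g r : u \in G -> g \in G ->
  `|vnorm (rG u *m r - x0) - orbit_dist (u * g^-1)%g| <= vnorm (r - rG g^-1%g *m x0).
Proof.
move=> uG gG; rewrite /orbit_dist repr_mxM ?groupV // -mulmxA.
apply: le_trans (vnormB_lipschitz _ _ _) _.
by rewrite -mulmxBr vnorm_unitary //; apply: rG_unitary.
Qed.

Variables (m : nat) (Gs : nat -> {group gT}) (CL : nat -> {set gT}).
Hypothesis Gs0 : Gs 0 = 1%G.
Hypothesis Gsm : Gs m = G.
Hypothesis Gs_chain : forall k, (k < m)%N -> Gs k \subset Gs k.+1.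
Hypothesis CL_leaders :
  forall k, (1 <= k <= m)%N -> coset_leaders (Gs k.-1) (Gs k) (CL k).

Lemma Gs_sub i j : (i <= j <= m)%N -> Gs i \subset Gs j.
Proof.
case/andP; elim: j => [|j IH] ij jm; first by rewrite leqn0 in ij; rewrite (eqP ij).
rewrite leq_eqVlt ltnS in ij; case/orP: ij => [/eqP-> //|ij].
exact: subset_trans (IH ij (ltnW jm)) (Gs_chain jm).
Qed.

Lemma CL_sub k : (1 <= k <= m)%N -> CL k \subset Gs k.
Proof. by case/CL_leaders. Qed.

Lemma CL_subG k : (1 <= k <= m)%N -> CL k \subset G.
Proof.
move=> kP; apply: subset_trans (CL_sub kP) _.
by rewrite -Gsm Gs_sub // leqnn andbT; case/andP: kP.
Qed.

Lemma leader_decomposition k x : (k <= m)%N -> x \in Gs k ->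
  exists2 c : nat -> gT,
    forall i, (0 < i <= k)%N -> c i \in CL i & x = seg_prod c 0 k.
Proof.
elim: k x => [|k IH] x km xGs.
  by exists (fun=> 1%g) => [[|i] //|]; move: xGs; rewrite Gs0 inE => /eqP.
have [_ _ /(_ x xGs) [c' [[c'CL /lcosetP[y yGs ->]] _]]] := CL_leaders (k := k.+1) km.
have [c cCL ->] := IH y (ltnW km) yGs.
exists (fun i => if i == k.+1 then c' else c i) => [i /andP[i0 ik]|].
  case: eqP => [-> //|/eqP ik']; apply: cCL.
  by rewrite i0 -ltnS ltn_neqAle ik' ik.
rewrite seg_prodSr // eqxx; congr (_ * _)%g; apply: eq_seg_prod => i /andP[_ ik].
by rewrite ifN // neq_ltn ltnS ik.
Qed.

Hypothesis leaders_minimal : forall k, (1 <= k < m)%N ->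
  forall c, c \in ind_CL CL k m -> minimal_rep rG x0 (Gs k) c.

Lemma seg_prod_minimal c k : (0 < k <= m)%N ->
  (forall i, (k < i <= m)%N -> c i \in CL i) -> minimal_rep rG x0 (Gs k) (seg_prod c k m).
Proof.
case/andP=> k0 km cCL; case: (ltnP k m) => [km'|mk].
  by apply: leaders_minimal; [rewrite k0 | apply: seg_prod_ind_CL].
have -> : k = m by apply/eqP; rewrite eqn_leq km.
by rewrite seg_prodnn; apply: minimal_rep1.
Qed.

Section LeaderSequence.
Variables (c : nat -> gT) (g : gT).
Hypothesis c_leaders : forall i, (0 < i <= m)%N -> c i \in CL i.
Hypothesis gE : g = seg_prod c 0 m.

Lemma leader_in_G i : (0 < i <= m)%N -> c i \in G.
Proof. by move=> im; apply: (subsetP (CL_subG im)); apply: c_leaders. Qed.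

Lemma seg_prod_leaders_in_G k l : (l <= m)%N -> seg_prod c k l \in G.
Proof.
move=> lm; apply: seg_prod_mem => i /andP[ki il].
by rewrite leader_in_G // (leq_ltn_trans (leq0n k) ki) (leq_trans il lm).
Qed.

Lemma leader_orbit_dist_lt k a : (k < m)%N -> a \in CL k.+1 -> a != c k.+1 ->
  orbit_dist (c k.+1 * seg_prod c 0 k * g^-1)%g
  < orbit_dist (a * seg_prod c 0 k * g^-1)%g.
Proof.
move=> km aCL ac; have kS : (0 < k.+1 <= m)%N := km.
set P := seg_prod c 0 k; set Q := seg_prod c k.+1 m; set b := (a * (c k.+1)^-1)%g.
have gQP : g = (Q * (c k.+1 * P))%g by rewrite gE (seg_prod_split c (k := k.+1)).
have -> : (c k.+1 * P * g^-1 = Q^-1)%g by rewrite gQP invMg mulKVg.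
have -> : (a * P * g^-1 = b * Q^-1)%g by rewrite gQP !invMg !mulgA mulgK.
have bGs : b \in Gs k.+1 by rewrite groupM ?groupV // (subsetP (CL_sub kS)) ?c_leaders.
have bG : b \in G by rewrite groupM ?groupV // (subsetP (CL_subG kS)) ?c_leaders.
have bx0 : rG b *m x0 != x0.
  by apply: contra ac => /eqP/(fix_x0_eq1 bG)/eqP; rewrite -eq_mulgV1.
apply: orbit_dist_lt_minimal (seg_prod_minimal kS _) _.
- exact: seg_prod_leaders_in_G.
- exact: bG.
- by move=> i /andP[ki im]; rewrite c_leaders // im (leq_trans _ ki).
- by rewrite !inE bGs bx0.
Qed.

Lemma dec_state_leaders (key : gT -> nat) r k :
  vnorm (r - rG g^-1%g *m x0) < orbit_gap -> (k <= m)%N ->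
  dec_state rG x0 key CL r k = (rG (seg_prod c 0 k) *m r, seg_prod c 0 k).
Proof.
move=> noise; elim: k => [|k IH] km /=; first by rewrite repr_mx1 mul1mx.
have kS : (0 < k.+1 <= m)%N := km.
rewrite IH ?(ltnW km) //=; set P := seg_prod c 0 k.
have PG : P \in G by apply: seg_prod_leaders_in_G; apply: ltnW.
have gG : g \in G by rewrite gE seg_prod_leaders_in_G.
rewrite (dec_choice_strict_min _ (c_leaders kS)).
  by rewrite mulmxA -(repr_mxM rG (leader_in_G kS) PG).
move=> a aCL ac.
have close w : w \in G -> `|vnorm (rG w *m (rG P *m r) - x0)
    - orbit_dist (w * P * g^-1)%g| < orbit_gap.
  move=> wG; rewrite mulmxA -(repr_mxM rG wG PG).
  exact: le_lt_trans (noisy_orbit_dist r (groupM wG PG) gG) noise.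
have sep := orbit_gap_le (leader_orbit_dist_lt km aCL ac).
exact: lt_near_separated (close _ (leader_in_G kS)) (close _ (subsetP (CL_subG kS) _ aCL)) sep.
Qed.

End LeaderSequence.

Lemma subgroup_decode_correct (key : gT -> nat) g r : g \in G ->
  vnorm (r - rG g^-1%g *m x0) < orbit_gap -> subgroup_decode rG x0 key CL m r = g.
Proof.
move=> gG noise; have [|c c_leaders gE] := leader_decomposition (leqnn m) (x := g).
  by rewrite Gsm.
by rewrite /subgroup_decode (dec_state_leaders c_leaders gE) // -gE.
Qed.

End SubgroupDecoding.

Theorem mainTheorem5 (R : realType) (n : nat) (gT : finGroupType) (G : {group gT})
    (rG : mx_representation R[i] G n)
    (Hunit : forall g, g \in G -> unitary_mx (rG g))
    (Hfaithful : mx_faithful rG)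
    (x0 : 'cV[R[i]]_n) (Hx0 : vnorm x0 = 1) (Horbit : full_orbit rG x0)
    (m : nat) (Gs : nat -> {group gT})
    (HG0 : Gs 0%N = 1%G) (HGm : Gs m = G)
    (Hchain : forall k, (k < m)%N -> Gs k \proper Gs k.+1)
    (CL : nat -> {set gT})
    (HCL : forall k, (1 <= k <= m)%N -> coset_leaders (Gs k.-1) (Gs k) (CL k))
    (key : gT -> nat) (Hkey : injective key)
    (Hmin : forall k, (1 <= k < m)%N ->
       forall c, c \in ind_CL CL k m -> minimal_rep rG x0 (Gs k) c) :
  decodes_correctly_with_noise rG x0 key CL m.
Proof.
have Gs_chain k : (k < m)%N -> Gs k \subset Gs k.+1 by move/Hchain/proper_sub.
exists (orbit_gap rG x0); first exact: orbit_gap_gt0.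
by move=> g r; apply: (subgroup_decode_correct Hunit Horbit HG0 HGm Gs_chain HCL Hmin).
Qed.
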